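(* Let $K\in\mathcal{B}(H)$ and let $\Lambda_{TU}=\{(F(x),\Lambda_x,v(x))\}_{x\in X}$ be a continuous $(T,U)$-controlled $K$-$g$-fusion frame for $H$ with (positive) frame operator $S_C$. Let $V\in\mathcal{B}(H)$ be invertible such that $V^*$ commutes with $T$ and with $U$. Then the following are equivalent: (i) $\Gamma_{TU}=\{(VF(x),\Lambda_xP_{F(x)}V^*,v(x))\}_{x\in X}$ is a continuous $(T,U)$-controlled $VK$-$g$-fusion frame for $H$, i.e. there exist $0<A'\le B'<\infty$ with $$A'\|(VK)^*f\|^2\le\int_X v(x)^2\langle\Lambda_xP_{F(x)}V^*P_{VF(x)}Uf,\;\Lambda_xP_{F(x)}V^*P_{VF(x)}Tf\rangle\,d\mu(x)\le B'\|f\|^2\quad(f\in H);$$ (ii) the quotient operator $[(VK)^*/S_C^{1/2}V^*]$ is bounded; (iii) the quotient operator $[(VK)^*/(VS_CV^* )^{1/2}]$ is bounded.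
   Context: $H$ is a separable complex Hilbert space, $\mathcal{B}(H)$ the bounded operators on $H$, $\mathcal{GB}^+(H)$ the positive bounded operators on $H$ with bounded inverse, $P_M$ the orthogonal projection onto a closed subspace $M$. Let $(X,\mu)$ be a measure space, $\{K_x\}_{x\in X}$ Hilbert spaces, $v:X\to\mathbb{R}^+$ measurable, $F$ a map from $X$ to closed subspaces of $H$ with $x\mapsto P_{F(x)}f$ weakly measurable for all $f$, $\Lambda_x\in\mathcal{B}(F(x),K_x)$, and $T,U\in\mathcal{GB}^+(H)$. For $L\in\mathcal{B}(H)$, the family is a continuous $(T,U)$-controlled $L$-$g$-fusion frame for $H$ if there exist $0<A\le B<\infty$ with $A\|L^*f\|^2\le\int_X v(x)^2\langle\Lambda_xP_{F(x)}Uf,\Lambda_xP_{F(x)}Tf\rangle d\mu(x)\le B\|f\|^2$ for all $f\in H$. Its frame operator $S_C\in\mathcal{B}(H)$ is given by $\langle S_Cf,g\rangle=\int_X v(x)^2\langle T^*P_{F(x)}\Lambda_x^*\Lambda_xP_{F(x)}Uf,g\rangle d\mu(x)$. For $A_1,A_2\in\mathcal{B}(H)$, the quotient operator $[A_1/A_2]$ is the map $A_2f\mapsto A_1f$ from $\mathcal{R}(A_2)$ to $\mathcal{R}(A_1)$; it is bounded if it is well defined and there is $C>0$ with $\|A_1f\|\le C\|A_2f\|$ for all $f\in H$. *)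

From HB Require Import structures.
From mathcomp Require Import all_boot all_order all_algebra.
From mathcomp Require Import all_classical all_reals all_analysis.
From mathcomp Require Import complex.

Set Implicit Arguments.
Unset Strict Implicit.
Unset Printing Implicit Defensive.

Import Order.TTheory GRing.Theory Num.Theory.
Local Open Scope ring_scope.
Local Open Scope classical_set_scope.
Local Open Scope complex_scope.

Record hilbert (R : realType) := Hilbert {
  hcar :> lmodType R[i];
  hdot : hcar -> hcar -> R[i];
  hdot_linl : forall (a : R[i]) (x y z : hcar),
      hdot (a *: x + y) z = a * hdot x z + hdot y z;
  hdot_sym : forall x y : hcar, hdot y x = (hdot x y)^*;
  hdot_pos : forall x : hcar, 0 <= hdot x x;
  hdot_def : forall x : hcar, hdot x x = 0 -> x = 0;
  hcomplete : forall u : nat -> hcar,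
      (forall e : R, 0 < e -> exists N : nat, forall m n : nat,
         (N <= m)%N -> (N <= n)%N ->
         Num.sqrt (complex.Re (hdot (u m - u n) (u m - u n))) < e) ->
      exists l : hcar, forall e : R, 0 < e -> exists N : nat, forall n : nat,
         (N <= n)%N -> Num.sqrt (complex.Re (hdot (u n - l) (u n - l))) < e
}.

Section HilbertDefs.
Variable R : realType.

Definition hnorm (H : hilbert R) (x : H) : R := Num.sqrt (complex.Re (hdot x x)).

Definition separable (H : hilbert R) : Prop :=
  exists d : nat -> H, forall (x : H) (e : R), 0 < e ->
    exists n : nat, hnorm (x - d n) < e.

Definition is_linear_op (H1 H2 : hilbert R) (A : H1 -> H2) : Prop :=
  forall (a : R[i]) (x y : H1), A (a *: x + y) = a *: A x + A y.

Definition is_bounded (H1 H2 : hilbert R) (A : H1 -> H2) : Prop :=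
  is_linear_op A /\ exists C : R, forall x : H1, hnorm (A x) <= C * hnorm x.

Definition is_bounded_on (H1 H2 : hilbert R) (M : set H1) (A : H1 -> H2) : Prop :=
  (forall (a : R[i]) (x y : H1), M x -> M y -> A (a *: x + y) = a *: A x + A y)
  /\ exists C : R, forall x : H1, M x -> hnorm (A x) <= C * hnorm x.

Definition is_adjoint (H1 H2 : hilbert R) (A : H1 -> H2) (Astar : H2 -> H1) : Prop :=
  forall (x : H1) (y : H2), hdot (A x) y = hdot x (Astar y).

Definition has_bounded_inverse (H : hilbert R) (A : H -> H) : Prop :=
  exists B : H -> H, is_bounded B /\ (forall x, B (A x) = x) /\ (forall x, A (B x) = x).

Definition is_positive (H : hilbert R) (A : H -> H) : Prop :=
  forall x : H, 0 <= hdot (A x) x.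

Definition in_GBplus (H : hilbert R) (A : H -> H) : Prop :=
  [/\ is_bounded A, is_positive A & has_bounded_inverse A].

Definition closed_subspace (H : hilbert R) (M : set H) : Prop :=
  [/\ M 0, (forall (a : R[i]) x y, M x -> M y -> M (a *: x + y)) &
      forall (u : nat -> H) (l : H), (forall n, M (u n)) ->
        (forall e : R, 0 < e -> exists N : nat, forall n : nat,
           (N <= n)%N -> hnorm (u n - l) < e) -> M l].

Definition is_orth_proj (H : hilbert R) (M : set H) (P : H -> H) : Prop :=
  forall x : H, M (P x) /\ forall y : H, M y -> hdot (x - P x) y = 0.

Definition is_sqrt (H : hilbert R) (S Q : H -> H) : Prop :=
  [/\ is_bounded Q, is_positive Q & forall x, Q (Q x) = S x].

Definition quotient_bounded (H : hilbert R) (A1 A2 : H -> H) : Prop :=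
  (forall f g : H, A2 f = A2 g -> A1 f = A1 g) /\
  exists C : R, 0 < C /\ forall f : H, hnorm (A1 f) <= C * hnorm (A2 f).

Definition cintegrable d (X : measurableType d) (mu : {measure set X -> \bar R})
  (h : X -> R[i]) : Prop :=
  mu.-integrable setT (EFin \o (fun x => complex.Re (h x))) /\
  mu.-integrable setT (EFin \o (fun x => complex.Im (h x))).

Definition cintegral d (X : measurableType d) (mu : {measure set X -> \bar R})
  (h : X -> R[i]) : R[i] :=
  Complex (Rintegral mu setT (fun x => complex.Re (h x)))
          (Rintegral mu setT (fun x => complex.Im (h x))).

Definition weakly_measurable d (X : measurableType d) (H : hilbert R)
  (g : X -> H) : Prop :=
  forall y : H, measurable_fun setT (fun x => complex.Re (hdot (g x) y)) /\
                measurable_fun setT (fun x => complex.Im (hdot (g x) y)).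

(* The integrand of the controlled g-fusion frame condition, where
   Q x : H -> K x stands for the composite operator  Lambda_x P_{F(x)}
   (resp. Lambda_x P_{F(x)} V^* P_{VF(x)} for the family Gamma). *)
Definition frame_integrand d (X : measurableType d) (H : hilbert R)
  (K : X -> hilbert R) (v : X -> R) (Q : forall x, H -> K x) (T U : H -> H)
  (f g : H) (x : X) : R[i] :=
  ((v x) ^+ 2)%:C * hdot (Q x (U f)) (Q x (T g)).

Definition ctu_frame_ineq d (X : measurableType d) (mu : {measure set X -> \bar R})
  (H : hilbert R) (K : X -> hilbert R) (v : X -> R) (Q : forall x, H -> K x)
  (T U Lstar : H -> H) (A B : R) : Prop :=
  [/\ 0 < A, A <= B &
      forall f : H,
        cintegrable mu (frame_integrand v Q T U f f) /\
        (A * hnorm (Lstar f) ^+ 2)%:C <= cintegral mu (frame_integrand v Q T U f f)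
        <= (B * hnorm f ^+ 2)%:C].

Definition ctu_gfusion_frame d (X : measurableType d) (mu : {measure set X -> \bar R})
  (H : hilbert R) (K : X -> hilbert R) (v : X -> R) (F : X -> set H)
  (P : X -> H -> H) (Lam : forall x, H -> K x) (T U L Lstar : H -> H) : Prop :=
  [/\ is_bounded L /\ is_adjoint L Lstar, in_GBplus T /\ in_GBplus U,
      measurable_fun setT v /\ (forall x, 0 < v x),
      (forall x, closed_subspace (F x) /\ is_orth_proj (F x) (P x))
      /\ (forall f : H, weakly_measurable (fun x => P x f))
      /\ (forall x, is_bounded_on (F x) (Lam x)) &
      exists A B : R, ctu_frame_ineq mu v (fun x y => Lam x (P x y)) T U Lstar A B].

(* S is the frame operator of the family:
   <S f, g> = int v^2 <T^* P Lam^* Lam P U f, g> = int v^2 <Lam P U f, Lam P T g> *)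
Definition is_frame_operator d (X : measurableType d) (mu : {measure set X -> \bar R})
  (H : hilbert R) (K : X -> hilbert R) (v : X -> R)
  (P : X -> H -> H) (Lam : forall x, H -> K x) (T U S : H -> H) : Prop :=
  is_bounded S /\
  forall f g : H,
    hdot (S f) g = cintegral mu (frame_integrand v (fun x y => Lam x (P x y)) T U f g).

End HilbertDefs.

(* The whole proof rests on one quadratic form, f |-> <S_C V^* f, V^* f>:
   - since P_{F(x)} V^* P_{VF(x)} = P_{F(x)} V^* (orthogonal projections are
     determined by orthogonality), the frame integral of Gamma at f is the
     frame integral of Lambda at V^* f, i.e. <S_C V^* f, V^* f>;
   - a positive square root Q of S satisfies <S f, f> = ||Q f||^2, so this
     form equals both ||S_C^{1/2} V^* f||^2 and ||(V S_C V^* )^{1/2} f||^2;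
   - a quotient operator [A1/A2] with linear A1, A2 is bounded iff
     c ||A1 f||^2 <= ||A2 f||^2 for some c > 0.
   The file first develops the inner-product calculus, then these three facts,
   and the theorem reads off the cycle (i) => (ii) => (iii) => (i); the upper
   frame bound in (iii) => (i) comes from the boundedness of the square root. *)
From HB Require Import structures.
From mathcomp Require Import all_boot all_order all_algebra.
From mathcomp Require Import all_classical all_reals all_analysis.
From mathcomp Require Import complex.
From mathcomp Require Import lra.

Set Implicit Arguments.
Unset Strict Implicit.
Unset Printing Implicit Defensive.
Import Order.TTheory GRing.Theory Num.Theory.
Local Open Scope ring_scope.
Local Open Scope classical_set_scope.
Local Open Scope complex_scope.

Section InnerProduct.
Variable R : realType.
Variable H : hilbert R.
Implicit Types x y z : H.

Lemma hdotDl x y z : hdot (x + y) z = hdot x z + hdot y z.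
Proof. by have := hdot_linl 1 x y z; rewrite scale1r mul1r. Qed.

Lemma hdot0l z : hdot (0 : H) z = 0.
Proof.
have h := hdotDl 0 0 z; rewrite addr0 in h.
by apply: (addrI (hdot 0 z)); rewrite addr0 -h.
Qed.

Lemma hdotZl a x z : hdot (a *: x) z = a * hdot x z.
Proof. by have := hdot_linl a x 0 z; rewrite addr0 hdot0l addr0. Qed.

Lemma hdotNl x z : hdot (- x) z = - hdot x z.
Proof. by rewrite -scaleN1r hdotZl mulN1r. Qed.

Lemma hdotBl x y z : hdot (x - y) z = hdot x z - hdot y z.
Proof. by rewrite hdotDl hdotNl. Qed.

Lemma hdot_conj x y : (hdot x y)^* = hdot y x.
Proof. by rewrite [RHS]hdot_sym. Qed.

Lemma hdotDr x y z : hdot x (y + z) = hdot x y + hdot x z.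
Proof. by rewrite [LHS]hdot_sym hdotDl rmorphD /= !hdot_conj. Qed.

Lemma hdotZr a x y : hdot x (a *: y) = a^* * hdot x y.
Proof. by rewrite [LHS]hdot_sym hdotZl rmorphM /= hdot_conj. Qed.

Lemma hdotNr x z : hdot x (- z) = - hdot x z.
Proof. by rewrite [LHS]hdot_sym hdotNl rmorphN /= hdot_conj. Qed.

Lemma hdotBr x y z : hdot x (y - z) = hdot x y - hdot x z.
Proof. by rewrite hdotDr hdotNr. Qed.

Lemma hdot_ext (u w : H) : (forall z, hdot z u = hdot z w) -> u = w.
Proof.
move=> h; apply/eqP; rewrite -subr_eq0; apply/eqP; apply: hdot_def.
by rewrite hdotBr h subrr.
Qed.

Lemma ge0_complex_real (z : R[i]) : 0 <= z -> z = (complex.Re z)%:C.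
Proof. by case: z => a b; rewrite lecE /= => /andP[/eqP -> _]. Qed.

Lemma hdot_norm x : hdot x x = (hnorm x ^+ 2)%:C.
Proof.
have /ge0_complex_real hxx := hdot_pos x.
rewrite /hnorm sqr_sqrtr //; last by rewrite -lecR -hxx hdot_pos.
Qed.

Lemma hnorm_ge0 x : 0 <= hnorm x.
Proof. exact: sqrtr_ge0. Qed.

Lemma hnorm0 : hnorm (0 : H) = 0.
Proof. by rewrite /hnorm hdot0l /= sqrtr0. Qed.

Lemma hnorm_eq0 x : hnorm x = 0 -> x = 0.
Proof. by move=> h; apply: hdot_def; rewrite hdot_norm h expr2 mulr0. Qed.

End InnerProduct.

Section LinearOperators.
Variable R : realType.
Variable H : hilbert R.
Implicit Types x y : H.

Section Additivity.
Variable A : H -> H.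
Hypothesis linA : is_linear_op A.

Lemma linD x y : A (x + y) = A x + A y.
Proof. by have := linA 1 x y; rewrite !scale1r. Qed.

Lemma lin0 : A 0 = 0.
Proof.
have h := linD 0 0; rewrite addr0 in h.
by apply: (addrI (A 0)); rewrite addr0 -h.
Qed.

Lemma linZ a x : A (a *: x) = a *: A x.
Proof. by have := linA a x 0; rewrite !addr0 lin0 addr0. Qed.

Lemma linB x y : A (x - y) = A x - A y.
Proof. by rewrite linD -scaleN1r linZ scaleN1r. Qed.

End Additivity.

Lemma lin_comp (A B : H -> H) : is_linear_op A -> is_linear_op B ->
  is_linear_op (fun f => A (B f)).
Proof. by move=> linA linB a x y; rewrite linB linA. Qed.

Lemma adjoint_linear (A Astar : H -> H) : is_adjoint A Astar -> is_linear_op Astar.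
Proof.
move=> adjA a x y; apply: hdot_ext => z.
by rewrite -adjA hdotDr hdotZr hdotDr hdotZr -!adjA.
Qed.

(* A positive operator on a complex Hilbert space is self-adjoint
   (polarization: <Q w, w> is real for w = x + y and w = x + i y). *)
Lemma positive_selfadjoint (Q : H -> H) : is_linear_op Q -> is_positive Q ->
  forall x y, hdot (Q x) y = hdot x (Q y).
Proof.
move=> linQ posQ x y.
have e1 := ge0_complex_real (posQ (x + y)).
have e2 := ge0_complex_real (posQ (x + 'i *: y)).
have e3 := ge0_complex_real (posQ x).
have e4 := ge0_complex_real (posQ y).
rewrite (linD linQ) !hdotDl !hdotDr in e1.
rewrite (linD linQ) (linZ linQ) !hdotDl !hdotDr !hdotZl !hdotZr in e2.
rewrite -(hdot_conj (Q y) x).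
move: e1 e2 e3 e4.
case: (hdot (Q x) y) => a1 a2; case: (hdot (Q y) x) => b1 b2.
case: (hdot (Q x) x) => c1 c2; case: (hdot (Q y) y) => d1 d2.
simpc => /(congr1 (@complex.Im _)) /= e1 /(congr1 (@complex.Im _)) /= e2.
move=> /(congr1 (@complex.Im _)) /= e3 /(congr1 (@complex.Im _)) /= e4.
by congr Complex; lra.
Qed.

Lemma sqrt_quadratic_form (S Q : H -> H) : is_sqrt S Q ->
  forall f, hdot (S f) f = (hnorm (Q f) ^+ 2)%:C.
Proof.
case=> [[linQ _] posQ QQ] f.
by rewrite -QQ (positive_selfadjoint linQ posQ) hdot_norm.
Qed.

Lemma bounded_sqr (A : H -> H) (C : R) :
  (forall x, hnorm (A x) <= C * hnorm x) ->
  forall x, hnorm (A x) ^+ 2 <= C ^+ 2 * hnorm x ^+ 2.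
Proof.
move=> hC x; rewrite -exprMn ler_sqr ?nnegrE ?hnorm_ge0 //.
exact: le_trans (hnorm_ge0 _) (hC x).
Qed.

(* For linear A1, A2, the quotient [A1/A2] is bounded iff
   c ||A1 f||^2 <= ||A2 f||^2 for some c > 0 (well-definedness follows
   from linearity, since A2 f = 0 then forces A1 f = 0). *)
Lemma quotient_boundedP (A1 A2 : H -> H) : is_linear_op A1 -> is_linear_op A2 ->
  quotient_bounded A1 A2 <->
  exists c : R, 0 < c /\ forall f, c * hnorm (A1 f) ^+ 2 <= hnorm (A2 f) ^+ 2.
Proof.
move=> lin1 lin2; split.
  case=> _ [C [C0 hC]]; exists (C ^+ 2)^-1; split; first by rewrite invr_gt0 exprn_gt0.
  move=> f; rewrite ler_pdivrMl ?exprn_gt0 // -exprMn.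
  by rewrite ler_sqr ?nnegrE ?hnorm_ge0 // (le_trans (hnorm_ge0 _) (hC f)).
case=> c [c0 hc].
have sc0 : 0 < Num.sqrt c by rewrite sqrtr_gt0.
have bound f : hnorm (A1 f) <= (Num.sqrt c)^-1 * hnorm (A2 f).
  rewrite ler_pdivlMl // -ler_sqr ?nnegrE ?mulr_ge0 ?sqrtr_ge0 ?hnorm_ge0 //.
  by rewrite exprMn sqr_sqrtr ?hc // ltW.
split; last by exists (Num.sqrt c)^-1; rewrite invr_gt0.
move=> f g e; apply/eqP; rewrite -subr_eq0; apply/eqP; apply: hnorm_eq0.
apply/eqP; rewrite -(linB lin1) eq_le hnorm_ge0 andbT.
by rewrite (le_trans (bound _)) // (linB lin2) e subrr hnorm0 mulr0.
Qed.

End LinearOperators.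

Section Projections.
Variable R : realType.
Variable H : hilbert R.

Lemma orth_proj_eq (M : set H) (P : H -> H) :
  (forall (a : R[i]) x y, M x -> M y -> M (a *: x + y)) -> is_orth_proj M P ->
  forall y1 y2, (forall m, M m -> hdot (y1 - y2) m = 0) -> P y1 = P y2.
Proof.
move=> subM projP y1 y2 orth.
have Mdiff : M (P y1 - P y2).
  by rewrite addrC -scaleN1r; apply: subM; [case: (projP y2)|case: (projP y1)].
have e : P y1 - P y2 = (y1 - y2) - ((y1 - P y1) - (y2 - P y2)).
  by rewrite !opprB !addrA subrK [RHS]addrAC [y1 - P y2 - y1]addrAC subrr add0r addrC.
apply/eqP; rewrite -subr_eq0; apply/eqP; apply: hdot_def.
by rewrite {1}e hdotBl orth // hdotBl !(proj2 (projP _)) // !subr0.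
Qed.

(* P_M V^* P_{VM} = P_M V^*: the component of g orthogonal to VM is sent
   by V^* into the orthogonal complement of M. *)
Lemma proj_adjoint_image (M : set H) (P PV V Vstar : H -> H) :
  (forall (a : R[i]) x y, M x -> M y -> M (a *: x + y)) -> is_orth_proj M P ->
  is_orth_proj (V @` M) PV -> is_adjoint V Vstar ->
  forall g, P (Vstar (PV g)) = P (Vstar g).
Proof.
move=> subM projP projPV adjV g; apply: (orth_proj_eq subM projP) => m Mm.
rewrite -(linB (adjoint_linear adjV)) -(hdot_conj m) -adjV.
rewrite -(hdot_conj (PV g - g)) -opprB hdotNl (proj2 (projPV g)); last by exists m.
by rewrite oppr0 !conjc0.
Qed.

End Projections.

Lemma frame_integrand_transport (R : realType) (d : measure_display)
  (X : measurableType d) (H : hilbert R) (Kx : X -> hilbert R) (v : X -> R)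
  (Q Q' : forall x, H -> Kx x) (T U Vstar : H -> H) :
  (forall x f, Q' x f = Q x (Vstar f)) ->
  (forall f, Vstar (T f) = T (Vstar f)) -> (forall f, Vstar (U f) = U (Vstar f)) ->
  forall f g, frame_integrand v Q' T U f g = frame_integrand v Q T U (Vstar f) (Vstar g).
Proof.
by move=> hQ cT cU f g; apply: funext => x; rewrite /frame_integrand !hQ cT cU.
Qed.

Theorem theorem3p13 (R : realType) (d : measure_display) (X : measurableType d)
  (mu : {measure set X -> \bar R}) (H : hilbert R) (Kx : X -> hilbert R)
  (v : X -> R) (F : X -> set H) (P : X -> H -> H) (Lam : forall x : X, H -> Kx x)
  (T U K Kstar SC SChalf V Vstar VKstar W : H -> H) (PV : X -> H -> H) :
  separable H ->
  ctu_gfusion_frame mu v F P Lam T U K Kstar ->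
  is_frame_operator mu v P Lam T U SC ->
  is_positive SC ->
  is_bounded V -> has_bounded_inverse V -> is_adjoint V Vstar ->
  (forall f : H, Vstar (T f) = T (Vstar f)) ->
  (forall f : H, Vstar (U f) = U (Vstar f)) ->
  is_adjoint (fun f => V (K f)) VKstar ->
  (forall x : X, is_orth_proj (V @` F x) (PV x)) ->
  is_sqrt SC SChalf ->
  is_sqrt (fun f => V (SC (Vstar f))) W ->
  [<-> (exists A' B' : R,
          ctu_frame_ineq mu v (fun x f => Lam x (P x (Vstar (PV x f)))) T U VKstar A' B');
       quotient_bounded VKstar (fun f => SChalf (Vstar f));
       quotient_bounded VKstar W].
Proof.
move=> _ [_ _ _ [hF _] [A [B [_ _ frameLam]]]] [_ SCform] _ _ _ adjV cT cU adjVK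
  projPV sqrtSC sqrtW.
set Gamma := fun x f => Lam x (P x (Vstar (PV x f))).
have linVK := adjoint_linear adjVK.
have linS1 : is_linear_op (fun f => SChalf (Vstar f)).
  by apply: lin_comp; [case: sqrtSC => -[]|exact: adjoint_linear adjV].
have [[linW [CW boundW]] _ _] := sqrtW.
have GammaE x g : Gamma x g = Lam x (P x (Vstar g)).
  have [[_ subF _] projP] := hF x.
  by rewrite /Gamma (proj_adjoint_image subF projP (projPV x) adjV).
have integrand :=
  frame_integrand_transport v (Q := fun x y => Lam x (P x y)) GammaE cT cU.
(* Both square roots realize the form <S_C V^* f, V^* f>, the frame integral of Gamma. *)
have normW f : hnorm (SChalf (Vstar f)) ^+ 2 = hnorm (W f) ^+ 2.
  apply: complexI.
  by rewrite -(sqrt_quadratic_form sqrtSC) -(sqrt_quadratic_form sqrtW) adjV.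
have integral f : cintegral mu (frame_integrand v Gamma T U f f) = (hnorm (W f) ^+ 2)%:C.
  by rewrite integrand -SCform (sqrt_quadratic_form sqrtSC) normW.
split; [|split].
- case=> A' [B' [A'0 _ ineq]]; apply/quotient_boundedP => //.
  exists A'; split => // f; have [_ /andP[low _]] := ineq f.
  by rewrite integral lecR -normW in low.
- move=> /quotient_boundedP-/(_ linVK linS1) [c [c0 hc]].
  by apply/quotient_boundedP => //; exists c; split=> // f; rewrite -normW.
- move=> /quotient_boundedP-/(_ linVK linW) [c [c0 hc]].
  exists c, (c + CW ^+ 2); split; [done|by rewrite lerDl sqr_ge0|] => f.
  split; first by rewrite integrand; exact: (proj1 (frameLam (Vstar f))).
  rewrite integral !lecR hc /= mulrDl.
  apply: le_trans (bounded_sqr boundW f) _.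
  by rewrite lerDr mulr_ge0 ?sqr_ge0 ?ltW.
Qed.
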